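(* There is no monad morphism $i:\mathbb{L}\to\mathbb{OS}$ from the superextension monad to the monad $\mathbb{OS}$ whose components $iX:\lambda X\to OS(X)$ are embeddings.
   Context: All spaces are compact Hausdorff, all maps continuous. A monad on this category is a triple $(F,\eta,\mu)$ with $F$ an endofunctor and natural transformations $\eta:\mathrm{Id}\to F$, $\mu:F^2\to F$ satisfying $\mu X\circ\eta FX=\mu X\circ F\eta X=\mathrm{id}_{FX}$ and $\mu X\circ\mu FX=\mu X\circ F\mu X$. A monad morphism $(F,\eta,\mu)\to(F',\eta',\mu')$ is a natural transformation $i:F\to F'$ with $i\circ\eta=\eta'$ and $i X\circ \mu X=\mu' X\circ i F'X\circ F(iX)$. For a compactum $X$, $OS(X)$ is the subspace of $\prod_{\varphi\in C(X)}[\min\varphi,\max\varphi]$ consisting of functionals $\nu:C(X)\to\mathbb{R}$ that are normed ($\nu(1_X)=1$), weakly additive ($\nu(\varphi+c_X)=\nu(\varphi)+c$ for constants $c$), order-preserving, positively homogeneous and semiadditive ($\nu(\varphi+\psi)\le\nu(\varphi)+\nu(\psi)$); for $f:X\to Y$, $OS(f)(\nu)(\varphi)=\nu(\varphi\circ f)$. The monad $\mathbb{OS}=(OS,\eta,\mu)$ has $\eta X(x)(\varphi)=\varphi(x)$ and $\mu X(\nu)(\varphi)=\nu(\pi_\varphi)$ for $\nu\in OS(OS(X))$, where $\pi_\varphi:OS(X)\to\mathbb{R}$, $\pi_\varphi(\lambda)=\lambda(\varphi)$. $\mathbb{L}=(\lambda,\eta_\lambda,\mu_\lambda)$ is the standard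 superextension monad: $\lambda X$ is the space of maximal linked systems of closed subsets of $X$ (with its standard topology), $\eta_\lambda X(x)=\{A \text{ closed}: x\in A\}$, with the standard multiplication. *)

From Stdlib Require Import Reals List ClassicalEpsilon.
Open Scope R_scope.

(** A space: a carrier type, a predicate singling out the points, and a
    subbase; the topology is the one generated by the subbase on [pts]. *)
Record space : Type := Space {
  car : Type;
  pts : car -> Prop;
  subbase : (car -> Prop) -> Prop }.

Definition Open (X : space) (W : car X -> Prop) : Prop :=
  forall x, pts X x -> W x ->
    exists l : list (car X -> Prop),
      (forall S, In S l -> subbase X S /\ S x) /\
      (forall y, pts X y -> (forall S, In S l -> S y) -> W y).

Definition ClosedSub (X : space) (A : car X -> Prop) : Prop :=
  (forall x, A x -> pts X x) /\ Open X (fun x => ~ A x).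

Definition Continuous (X Y : space) (f : car X -> car Y) : Prop :=
  (forall x, pts X x -> pts Y (f x)) /\
  (forall W, Open Y W -> Open X (fun x => W (f x))).

Definition Hausdorff (X : space) : Prop :=
  forall x y, pts X x -> pts X y -> x <> y ->
    exists U V, Open X U /\ Open X V /\ U x /\ V y /\
      (forall z, pts X z -> ~ (U z /\ V z)).

Definition Compact (X : space) : Prop :=
  forall (I : Type) (U : I -> car X -> Prop),
    (forall i, Open X (U i)) ->
    (forall x, pts X x -> exists i, U i x) ->
    exists l : list I, forall x, pts X x -> exists i, In i l /\ U i x.

Definition compactum (X : space) : Prop := Hausdorff X /\ Compact X.

Definition embedding (X Y : space) (f : car X -> car Y) : Prop :=
  Continuous X Y f /\
  (forall x y, pts X x -> pts X y -> f x = f y -> x = y) /\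
  (forall W, Open X W -> exists V, Open Y V /\
      forall x, pts X x -> (W x <-> V (f x))).

Definition Rsp : space :=
  Space R (fun _ => True) (fun S => exists a b, forall y, S y <-> a < y < b).

(** C(X): continuous real functions (raw functions, only values on pts matter). *)
Definition contfun (X : space) (phi : car X -> R) : Prop := Continuous X Rsp phi.

(** OS(X): functionals on C(X), encoded as raw functionals that vanish on
    non-continuous arguments and depend only on values on the points. *)
Definition OSmem (X : space) (nu : (car X -> R) -> R) : Prop :=
  (forall phi, ~ contfun X phi -> nu phi = 0) /\
  (forall phi psi, (forall x, pts X x -> phi x = psi x) -> nu phi = nu psi) /\
  (forall phi, contfun X phi ->
     (forall c, (forall x, pts X x -> c <= phi x) -> c <= nu phi) /\
     (forall c, (forall x, pts X x -> phi x <= c) -> nu phi <= c)) /\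
  nu (fun _ => 1) = 1 /\
  (forall phi c, contfun X phi -> nu (fun x => phi x + c) = nu phi + c) /\
  (forall phi psi, contfun X phi -> contfun X psi ->
     (forall x, pts X x -> phi x <= psi x) -> nu phi <= nu psi) /\
  (forall phi t, contfun X phi -> 0 <= t ->
     nu (fun x => t * phi x) = t * nu phi) /\
  (forall phi psi, contfun X phi -> contfun X psi ->
     nu (fun x => phi x + psi x) <= nu phi + nu psi).

Definition OSsp (X : space) : space :=
  Space ((car X -> R) -> R) (OSmem X)
    (fun S => exists phi a b, contfun X phi /\
                forall nu, S nu <-> a < nu phi < b).

Definition linked (X : space) (xi : (car X -> Prop) -> Prop) : Prop :=
  (forall A, xi A -> ClosedSub X A) /\
  (forall A B, xi A -> xi B -> exists x, A x /\ B x).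

Definition maxlinked (X : space) (xi : (car X -> Prop) -> Prop) : Prop :=
  linked X xi /\ (exists A, xi A) /\
  (forall eta, linked X eta -> (forall A, xi A -> eta A) ->
     forall A, eta A -> xi A).

Definition lamsp (X : space) : space :=
  Space ((car X -> Prop) -> Prop) (maxlinked X)
    (fun S => exists U, Open X U /\
        forall xi, S xi <-> exists A, xi A /\ forall x, A x -> U x).

Definition lmap (X Y : space) (f : car X -> car Y)
    (xi : (car X -> Prop) -> Prop) : (car Y -> Prop) -> Prop :=
  fun B => ClosedSub Y B /\ xi (fun x => pts X x /\ B (f x)).

Definition etaL (X : space) (x : car X) : (car X -> Prop) -> Prop :=
  fun A => ClosedSub X A /\ A x.

Definition muL (X : space) (M : car (lamsp (lamsp X))) : car (lamsp X) :=
  fun A => ClosedSub X A /\ M (fun xi => maxlinked X xi /\ xi A).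

Definition osmap (X Y : space) (f : car X -> car Y)
    (nu : (car X -> R) -> R) : (car Y -> R) -> R :=
  fun phi => if excluded_middle_informative (contfun Y phi)
             then nu (fun x => phi (f x)) else 0.

Definition etaOS (X : space) (x : car X) : (car X -> R) -> R :=
  fun phi => if excluded_middle_informative (contfun X phi) then phi x else 0.

Definition muOS (X : space) (N : car (OSsp (OSsp X))) : car (OSsp X) :=
  fun phi => if excluded_middle_informative (contfun X phi)
             then N (fun nu => nu phi) else 0.

(** Monad morphism L -> OS on the category of compacta (components given on
    all spaces; only the components at compacta are constrained). *)
Definition monad_morphism_L_OS
    (i : forall X : space, car (lamsp X) -> car (OSsp X)) : Prop :=
  (forall X Y : space, compactum X -> compactum Y ->
     forall f, Continuous X Y f ->
     forall xi, pts (lamsp X) xi ->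
       i Y (lmap X Y f xi) = osmap X Y f (i X xi)) /\
  (forall X : space, compactum X ->
     forall x, pts X x -> i X (etaL X x) = etaOS X x) /\
  (forall X : space, compactum X ->
     forall M, pts (lamsp (lamsp X)) M ->
       i X (muL X M) =
       muOS X (i (OSsp X) (lmap (lamsp X) (OSsp X) (i X) M))).

(** On the three-point discrete space, the "majority" system of all sets
    containing at least two of the three points is maximal linked.  Merging any
    one point into another sends it, under [lambda], to the Dirac system of the
    target point; naturality and the unit law then force the functional
    [nu := i majority] to satisfy [nu phi = phi y] whenever [phi x = phi y] for
    two distinct points [x], [y].  Hence [nu (1_a + 1_b) = 1] while
    [nu 1_a = nu 1_b = 0], contradicting semiadditivity. *)
From Stdlib Require Import Reals List ClassicalEpsilon FunctionalExtensionality
  PropExtensionality Lra.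
Open Scope R_scope.

Section DiscreteSpace.

Variable T : Type.

Definition discrete : space :=
  Space T (fun _ => True) (fun S => exists t, forall y, S y <-> y = t).

Lemma discrete_open (W : T -> Prop) : Open discrete W.
Proof.
  intros x _ Wx; exists ((fun y => y = x) :: nil); split.
  - intros S [<- | []]; split; [exists x; tauto | reflexivity].
  - intros y _ Hy; specialize (Hy _ (or_introl eq_refl)); simpl in Hy.
    subst; exact Wx.
Qed.

Lemma discrete_closed (A : T -> Prop) : ClosedSub discrete A.
Proof. split; [intros; exact I | apply discrete_open]. Qed.

Lemma discrete_continuous (Y : space) (f : T -> car Y) :
  (forall x, pts Y (f x)) -> Continuous discrete Y f.
Proof. intros Hf; split; [intros; apply Hf | intros; apply discrete_open]. Qed.

Lemma discrete_Hausdorff : Hausdorff discrete.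
Proof.
  intros x y _ _ Hxy; exists (fun z => z = x), (fun z => z = y).
  repeat split; try apply discrete_open; auto.
  intros z _ [-> ->]; exact (Hxy eq_refl).
Qed.

Lemma discrete_Compact (enum : list T) :
  (forall t, In t enum) -> Compact discrete.
Proof.
  intros Henum Idx U _ Hcov.
  assert (Hfin : forall l : list T, exists li : list Idx,
            forall x, In x l -> exists i, In i li /\ U i x).
  { induction l as [| x l [li Hli]]; [exists nil; intros _ [] |].
    destruct (Hcov x I) as [i Hi]; exists (i :: li).
    intros y [<- | Hy]; [exists i; simpl; auto |].
    destruct (Hli y Hy) as [j [Hj Uj]]; exists j; simpl; auto. }
  destruct (Hfin enum) as [li Hli]; exists li; intros x _; exact (Hli x (Henum x)).
Qed.

End DiscreteSpace.

Inductive three := p1 | p2 | p3.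

Definition three_eq_dec (x y : three) : {x = y} + {x <> y}.
Proof. decide equality. Defined.

Definition X3 : space := discrete three.

Lemma X3_compactum : compactum X3.
Proof.
  split; [apply discrete_Hausdorff |].
  apply (discrete_Compact three (p1 :: p2 :: p3 :: nil)).
  intros []; simpl; auto.
Qed.

Lemma X3_contfun (phi : three -> R) : contfun X3 phi.
Proof. apply discrete_continuous; intros; exact I. Qed.

Definition majority (A : three -> Prop) : Prop :=
  (A p1 /\ A p2) \/ (A p1 /\ A p3) \/ (A p2 /\ A p3).

(* Maximality: a set meeting all three two-point sets contains two points. *)
Lemma majority_maxlinked : maxlinked X3 majority.
Proof.
  split; [split | split].
  - intros A _; apply discrete_closed.
  - intros A B HA HB; unfold majority in *.
    destruct HA as [[] | [[] | []]]; destruct HB as [[] | [[] | []]]; eauto.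
  - exists (fun _ => True); left; auto.
  - intros eta [_ Hlinked] Hsub A HA.
    assert (Hmeets : forall x y, majority (fun z => z = x \/ z = y) ->
              A x \/ A y).
    { intros x y Hxy.
      destruct (Hlinked A _ HA (Hsub _ Hxy)) as [z [Az [-> | ->]]]; auto. }
    pose proof (Hmeets p1 p2 ltac:(left; auto)).
    pose proof (Hmeets p1 p3 ltac:(right; left; auto)).
    pose proof (Hmeets p2 p3 ltac:(right; right; auto)).
    unfold majority; tauto.
Qed.

Definition merge (x y z : three) : three :=
  if three_eq_dec z x then y else z.

Lemma lmap_merge_majority (x y : three) :
  x <> y -> lmap X3 X3 (merge x y) majority = etaL X3 y.
Proof.
  intros Hxy; apply functional_extensionality; intro B.
  apply propositional_extensionality; unfold lmap, etaL, majority; simpl.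
  destruct x, y; try congruence; simpl; tauto.
Qed.

Lemma monad_morphism_on_collapse
    (i : forall X : space, car (lamsp X) -> car (OSsp X))
    (X Y : space) (f : car X -> car Y) (xi : car (lamsp X)) (p : car Y)
    (phi : car Y -> R) :
  monad_morphism_L_OS i -> compactum X -> compactum Y -> Continuous X Y f ->
  maxlinked X xi -> pts Y p -> lmap X Y f xi = etaL Y p -> contfun Y phi ->
  i X xi (fun x => phi (f x)) = phi p.
Proof.
  intros [Hnat [Hunit _]] HX HY Hf Hxi Hp Hcollapse Hphi.
  pose proof (Hnat X Y HX HY f Hf xi Hxi) as Hnat_f.
  rewrite Hcollapse, (Hunit Y HY p Hp) in Hnat_f.
  apply (f_equal (fun nu => nu phi)) in Hnat_f.
  unfold etaOS, osmap in Hnat_f.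
  destruct (excluded_middle_informative (contfun Y phi)); congruence.
Qed.

Lemma monad_morphism_majority_pairwise_evaluation
    (i : forall X : space, car (lamsp X) -> car (OSsp X)) :
  monad_morphism_L_OS i ->
  forall x y (phi : three -> R), x <> y -> phi x = phi y ->
    i X3 majority phi = phi y.
Proof.
  intros Hmor x y phi Hxy Hphi.
  replace phi with (fun z => phi (merge x y z)) at 1.
  - apply (monad_morphism_on_collapse i X3 X3); auto using X3_compactum.
    + apply discrete_continuous; intros; exact I.
    + exact majority_maxlinked.
    + exact I.
    + apply lmap_merge_majority, Hxy.
    + apply X3_contfun.
  - apply functional_extensionality; intro z; unfold merge.
    destruct (three_eq_dec z x) as [-> |]; auto.
Qed.

Definition one (x z : three) : R := if three_eq_dec z x then 1 else 0.

Lemma no_OSmem_pairwise_evaluation (nu : (three -> R) -> R) :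
  OSmem X3 nu ->
  ~ (forall x y (phi : three -> R), x <> y -> phi x = phi y -> nu phi = phi y).
Proof.
  intros Hnu Hcollapse.
  destruct Hnu as [_ [_ [_ [_ [_ [_ [_ Hsemiadd]]]]]]].
  assert (Hle : nu (fun z => one p1 z + one p2 z) <= nu (one p1) + nu (one p2))
    by exact (Hsemiadd (one p1) (one p2) (X3_contfun _) (X3_contfun _)).
  assert (Hsum : nu (fun z => one p1 z + one p2 z) = 1).
  { rewrite (Hcollapse p2 p1); [| discriminate | unfold one; simpl; ring].
    unfold one; simpl; ring. }
  assert (H1 : nu (one p1) = 0)
    by (rewrite (Hcollapse p3 p2); [reflexivity | discriminate | reflexivity]).
  assert (H2 : nu (one p2) = 0)
    by (rewrite (Hcollapse p3 p1); [reflexivity | discriminate | reflexivity]).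
  lra.
Qed.

Theorem corollary1 :
  ~ exists i : forall X : space, car (lamsp X) -> car (OSsp X),
      monad_morphism_L_OS i /\
      (forall X : space, compactum X -> embedding (lamsp X) (OSsp X) (i X)).
Proof.
  intros [i [Hmor Hemb]].
  destruct (Hemb X3 X3_compactum) as [[Hlands _] _].
  apply (no_OSmem_pairwise_evaluation (i X3 majority)).
  - exact (Hlands majority majority_maxlinked).
  - exact (monad_morphism_majority_pairwise_evaluation i Hmor).
Qed.
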